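(* Let $\mathcal{R}$ be a rational set of regular languages over an alphabet $\Sigma$. Then its complement $\overline{\mathcal{R}}=\{L\subseteq\Sigma^*\mid L\notin\mathcal{R}\}$ is not a rational set of regular languages.
   Context: An alphabet is a nonempty finite set. A regular language substitution $\varphi:\Delta\to2^{\Sigma^*}$ maps each symbol of an alphabet $\Delta$ to a regular language over $\Sigma$, extended by $\varphi(\delta w)=\varphi(\delta)\varphi(w)$. A set $\mathcal{R}$ of regular languages over $\Sigma$ is a rational set of regular languages if there are an alphabet $\Delta$, a regular $K\subseteq\Delta^+$ and a regular language substitution $\varphi$ with $\mathcal{R}=\{\varphi(w)\mid w\in K\}$. *)

(* alphabets are nonempty finTypes, words are seq, languages
   are Prop-valued predicates on words; sets of languages are predicates on
   languages, compared up to extensional equality of languages. *)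
From mathcomp Require Import all_boot.
Set Implicit Arguments. Unset Strict Implicit. Unset Printing Implicit Defensive.

Definition alphabet (S : finType) : Prop := 0 < #|S|.

Definition language (S : finType) := seq S -> Prop.

Definition lang_eq (S : finType) (L1 L2 : language S) : Prop :=
  forall w, L1 w <-> L2 w.

Definition regular (S : finType) (L : language S) : Prop :=
  exists (Q : finType) (q0 : Q) (d : Q -> S -> Q) (F : pred Q),
    forall w, L w <-> F (foldl d q0 w).

Definition eps_lang (S : finType) : language S := fun w => w = [::].

Definition conc (S : finType) (L1 L2 : language S) : language S :=
  fun w => exists u v, w = u ++ v /\ L1 u /\ L2 v.

Definition subst_word (D S : finType) (phi : D -> language S) (w : seq D)
  : language S := foldr (fun d L => conc (phi d) L) (@eps_lang S) w.

Definition lang_set (S : finType) := language S -> Prop.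

Definition rational_set (S : finType) (R : lang_set S) : Prop :=
  exists (D : finType) (K : language D) (phi : D -> language S),
    [/\ alphabet D,
        regular K,
        (forall w, K w -> w <> [::]),
        (forall d, regular (phi d)) &
        (forall L, R L <-> exists w, K w /\ lang_eq L (subst_word phi w))].

Definition lang_set_compl (S : finType) (R : lang_set S) : lang_set S :=
  fun L => ~ R L.

(* A rational set of languages is the image of the countable set of words
   over an auxiliary alphabet, so it is covered by countably many languages.
   A set and its complement together contain every language, but the
   languages over a nonempty alphabet are uncountable: diagonalising along
   the words [s0^n] yields a language different from every member of any
   countable family. *)
From mathcomp Require Import all_boot.

Set Implicit Arguments.
Unset Strict Implicit.
Unset Printing Implicit Defensive.

Definition countably_covered (S : finType) (R : lang_set S) : Prop :=
  exists (I : countType) (F : I -> language S),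
    forall L, R L -> exists i, lang_eq L (F i).

Lemma rational_set_countably_covered (S : finType) (R : lang_set S) :
  rational_set R -> countably_covered R.
Proof.
move=> [D [K [phi [_ _ _ _ defR]]]].
exists (seq D), (subst_word phi) => L /defR [w [_ eqL]].
by exists w.
Qed.

Lemma countably_covered_or (S : finType) (R1 R2 : lang_set S) :
  countably_covered R1 -> countably_covered R2 ->
  countably_covered (fun L => R1 L \/ R2 L).
Proof.
move=> [I1 [F1 cov1]] [I2 [F2 cov2]].
exists (I1 + I2)%type, (fun i => match i with inl i1 => F1 i1 | inr i2 => F2 i2 end).
move=> L [/cov1 [i eqL] | /cov2 [i eqL]]; first by exists (inl i).
by exists (inr i).
Qed.

Lemma exists_diagonal_language (S : finType) (s0 : S) (I : countType)
    (F : I -> language S) :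
  exists L : language S, forall i, ~ lang_eq L (F i).
Proof.
pose code (i : I) := nseq (pickle i) s0.
have code_inj : injective code.
  by move=> i j /(congr1 size); rewrite !size_nseq; exact: (pcan_inj (@pickleK _)).
exists (fun w => exists i, w = code i /\ ~ F i (code i)) => i eqL.
have diag : (exists j, code i = code j /\ ~ F j (code j)) <-> ~ F i (code i).
  by split=> [[j [/code_inj -> //]] | notFi]; exists i.
have notFi : ~ F i (code i) by move=> Fi; exact: (proj1 diag (proj2 (eqL _) Fi)) Fi.
exact/notFi/(eqL _).1/(diag.2 notFi).
Qed.

Lemma countably_covered_compl (S : finType) (R : lang_set S) :
  alphabet S -> countably_covered R -> ~ countably_covered (lang_set_compl R).
Proof.
case/card_gt0P=> s0 _ covR covRc.
have [I [F cov]] := countably_covered_or covR covRc.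
have [L notF] := exists_diagonal_language s0 F.
have notRL : ~ R L by move=> RL; have [i /notF] := cov L (or_introl RL).
by have [i /notF] := cov L (or_intror notRL).
Qed.

Theorem proposition3 (S : finType) (R : lang_set S) :
  alphabet S -> rational_set R -> ~ rational_set (lang_set_compl R).
Proof.
move=> alphS /rational_set_countably_covered covR
  /rational_set_countably_covered.
exact: countably_covered_compl.
Qed.
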